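(* Assume the setting and the nsCRAIG recurrence described in the context. Then every $\alpha_k$ produced by the recurrence is strictly positive (so the recurrence can only stop through $\beta_{k+1}=0$), and if $\beta_{k+1}=0$ for some $k$, then the nsCRAIG iterates $(u^{(k)},p^{(k)})$ equal the exact solution $(u_*,p_* )$ of the generalized saddle point system.
   Context: Setting: $M\in\mathbb{R}^{m\times m}$ is nonsymmetric and positive definite ($x^TMx>0$ for all $x\ne0$); $A\in\mathbb{R}^{m\times n}$ ($n\le m$) has full column rank; $C\in\mathbb{R}^{n\times n}$ is symmetric positive semidefinite; $b\in\mathbb{R}^n$ is nonzero; $N\in\mathbb{R}^{n\times n}$ is symmetric positive definite. Write $\|x\|_G=(x^TGx)^{1/2}$ for $G$ positive definite (for nonsymmetric $M$ this is the norm of its symmetric part). The generalized saddle point system is $Mu+Ap=0$, $A^Tu-Cp=b$, with unique solution $(u_*,p_* )$; $S=A^TM^{-1}A+C$. nsCRAIG recurrence (exact arithmetic): Initialization: $\beta_1=\|b\|_{N^{-1}}$, $q_1=N^{-1}b/\beta_1$, $Q_1=[q_1]$, $r_1=q_1$, $w_1=M^{-1}Aq_1$, $s_1=Cr_1$, $\alpha_1=(w_1^TMw_1+r_1^Ts_1)^{1/2}$, $v_1=w_1/\alpha_1$, $t_1=s_1/\alpha_1$, $\chi_1=\beta_1/\alpha_1$. For $k=1,2,\dots$: $\hat g_k=N^{-1}(A^Tv_k+t_k)$, $h_k=Q_k^TN\hat g_k\in\mathbb{R}^k$, $g_k=\hat g_k-Q_kh_k$, $\beta_{k+1}=\|g_k\|_N$;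 if $\beta_{k+1}=0$ the recurrence stops; otherwise $q_{k+1}=g_k/\beta_{k+1}$, $Q_{k+1}=[Q_k,q_{k+1}]$, $w_{k+1}=M^{-1}Aq_{k+1}-\beta_{k+1}v_k$, $r_{k+1}=q_{k+1}-(\beta_{k+1}/\alpha_k)r_k$, $s_{k+1}=Cr_{k+1}$, $\alpha_{k+1}=(w_{k+1}^TMw_{k+1}+r_{k+1}^Ts_{k+1})^{1/2}$, $v_{k+1}=w_{k+1}/\alpha_{k+1}$, $t_{k+1}=s_{k+1}/\alpha_{k+1}$, $\chi_{k+1}=-(\beta_{k+1}/\alpha_{k+1})\chi_k$. Matrices: $B_k\in\mathbb{R}^{k\times k}$ upper bidiagonal with $(B_k)_{ii}=\alpha_i$, $(B_k)_{i,i+1}=\beta_{i+1}$; $H_k\in\mathbb{R}^{k\times k}$ upper Hessenberg whose $j$-th column has entries $(H_k)_{ij}=(h_j)_i$ for $i\le j$, $(H_k)_{j+1,j}=\beta_{j+1}$ (if $j<k$), and zeros otherwise. The nsCRAIG iterates at step $k$ are $y_k=-B_k^{-1}H_k^{-1}(\beta_1e_1)$, $p^{(k)}=Q_ky_k$, $u^{(k)}=-M^{-1}Ap^{(k)}$, with $e_1$ the first unit vector of $\mathbb{R}^k$. *)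

From mathcomp Require Import all_boot all_order all_algebra.
Set Implicit Arguments. Unset Strict Implicit. Unset Printing Implicit Defensive.
Import Order.TTheory GRing.Theory Num.Theory.
Local Open Scope ring_scope.

Definition qf (R : rcfType) (k : nat) (G : 'M[R]_k) (x : 'cV[R]_k) : R :=
  (x^T *m G *m x) 0 0.

Definition Gnorm (R : rcfType) (k : nat) (G : 'M[R]_k) (x : 'cV[R]_k) : R :=
  Num.sqrt (qf G x).

Definition posdef (R : rcfType) (k : nat) (G : 'M[R]_k) : Prop :=
  forall x : 'cV[R]_k, x != 0 -> 0 < qf G x.

Definition possemidef (R : rcfType) (k : nat) (G : 'M[R]_k) : Prop :=
  forall x : 'cV[R]_k, 0 <= qf G x.

(* B_K: K x K upper bidiagonal, (B)_{ii} = alpha_i, (B)_{i,i+1} = beta_{i+1}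
   (1-based indices in the paper; matrix indices here are 0-based) *)
Definition Bmat (R : rcfType) (alpha beta : nat -> R) (K : nat) : 'M[R]_K :=
  \matrix_(i < K, j < K)
    (if (j == i :> nat) then alpha i.+1
     else if (j == i.+1 :> nat) then beta j.+1 else 0).

(* H_K: K x K upper Hessenberg, column j (1-based) has (h_j)_i for i <= j,
   beta_{j+1} at row j+1, zeros otherwise. h j i = (h_j)_i (1-based). *)
Definition Hmat (R : rcfType) (h : nat -> nat -> R) (beta : nat -> R) (K : nat)
  : 'M[R]_K :=
  \matrix_(i < K, j < K)
    (if (i <= j)%N then h j.+1 i.+1
     else if (i == j.+1 :> nat) then beta j.+2 else 0).

Definition Qmat (R : rcfType) (n : nat) (q : nat -> 'cV[R]_n) (K : nat)
  : 'M[R]_(n, K) :=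
  \matrix_(i < n, j < K) q j.+1 i 0.

Definition e1 (R : rcfType) (K : nat) : 'cV[R]_K :=
  \col_(i < K) (if (i == 0 :> nat) then 1 else 0).

Definition craig_y (R : rcfType) (alpha beta : nat -> R) (h : nat -> nat -> R)
  (K : nat) : 'cV[R]_K :=
  - (invmx (Bmat alpha beta K) *m invmx (Hmat h beta K) *m (beta 1 *: e1 R K)).

Definition craig_p (R : rcfType) (n : nat) (q : nat -> 'cV[R]_n)
  (alpha beta : nat -> R) (h : nat -> nat -> R) (K : nat) : 'cV[R]_n :=
  Qmat q K *m craig_y alpha beta h K.

Definition craig_u (R : rcfType) (m n : nat) (M : 'M[R]_m) (A : 'M[R]_(m, n))
  (q : nat -> 'cV[R]_n) (alpha beta : nat -> R) (h : nat -> nat -> R) (K : nat)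
  : 'cV[R]_m :=
  - (invmx M *m A *m craig_p q alpha beta h K).

From mathcomp Require Import all_boot all_order all_algebra.
From mathcomp Require Import lra.
Import Order.TTheory GRing.Theory Num.Theory.
Local Open Scope ring_scope.
Set Implicit Arguments. Unset Strict Implicit. Unset Printing Implicit Defensive.

(* The vectors q_j are N-orthonormal (each g_j is the Gram-Schmidt residual of
   ghat_j against q_1, ..., q_j), and r_j has N-coefficient 1 on q_j, so r_j <> 0;
   full column rank of A then gives w_j = M^-1 A r_j <> 0, hence alpha_j > 0.
   Column by column the recurrence says M^-1 A Q_k = V_k B_k, C Q_k = T_k B_k,
   N Ghat_k = A^T V_k + T_k and, once beta_(k+1) = 0, Q_k H_k = Ghat_k.  For the
   Schur complement S this yields S Q_k = N Q_k H_k B_k, so H_k B_k = Q_k^T S Q_k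
   is positive definite and S p^(k) = - beta_1 N q_1 = - b = S p_*. *)

Lemma sum_nat_mulrb (V : nmodType) (a b i : nat) (F : nat -> V) :
  \sum_(a <= l < b) F l *+ (l == i) = if (a <= i < b)%N then F i else 0.
Proof.
rewrite (eq_bigr (fun l => if l == i then F l else 0)) => [|l _]; last exact: mulrb.
by rewrite -big_mkcond big_nat1_eq.
Qed.

Section BilinearForm.
Variables (R : rcfType) (k : nat).
Implicit Types (G : 'M[R]_k) (x y z : 'cV[R]_k).

Definition bform G x y : R := (x^T *m G *m y) 0 0.

Lemma qfE G x : qf G x = bform G x x. Proof. by []. Qed.

Lemma bformDr G x y z : bform G x (y + z) = bform G x y + bform G x z.
Proof. by rewrite /bform mulmxDr mxE. Qed.

Lemma bformBr G x y z : bform G x (y - z) = bform G x y - bform G x z.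
Proof. by rewrite bformDr {2}/bform mulmxN mxE. Qed.

Lemma bformZr G x a y : bform G x (a *: y) = a * bform G x y.
Proof. by rewrite /bform -scalemxAr mxE. Qed.

Lemma bformZl G a x y : bform G (a *: x) y = a * bform G x y.
Proof. by rewrite /bform linearZ /= -!scalemxAl mxE. Qed.

Lemma bform_sumr G x (I : Type) (r : seq I) (P : pred I) (F : I -> 'cV_k) :
  bform G x (\sum_(i <- r | P i) F i) = \sum_(i <- r | P i) bform G x (F i).
Proof. by rewrite /bform mulmx_sumr summxE. Qed.

Lemma bform0r G x : bform G x 0 = 0.
Proof. by rewrite /bform mulmx0 mxE. Qed.

Lemma bform_trmx G x y : bform G^T x y = bform G y x.
Proof.
have tr11 (X : 'M[R]_1) : X^T 0 0 = X 0 0 by rewrite mxE.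
by rewrite /bform -tr11 !trmx_mul !trmxK mulmxA.
Qed.

Lemma bformC G x y : G^T = G -> bform G x y = bform G y x.
Proof. by move=> sG; rewrite -bform_trmx sG. Qed.

Lemma qf_trmx G x : qf G^T x = qf G x.
Proof. exact: bform_trmx. Qed.

Lemma sqr_Gnorm G x : 0 <= qf G x -> Gnorm G x ^+ 2 = qf G x.
Proof. exact: sqr_sqrtr. Qed.

Lemma posdef_semidef G : posdef G -> possemidef G.
Proof.
move=> pG x; have [->|/pG/ltW //] := eqVneq x 0.
by rewrite qfE bform0r.
Qed.

Lemma posdef_qf_eq0 G x : posdef G -> qf G x = 0 -> x = 0.
Proof. by move=> pG qx0; apply/eqP; apply: contraT => /pG; rewrite qx0 ltxx. Qed.

Lemma posdef_unitmx G : posdef G -> G \in unitmx.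
Proof.
move=> pG; rewrite unitmxE unitfE; apply/det0P => -[x x_neq0 xG0].
have := pG x^T; rewrite trmx_eq0 => /(_ x_neq0).
by rewrite /qf trmxK xG0 mul0mx mxE ltxx.
Qed.

Lemma posdef_mulmxI G x y : posdef G -> G *m x = G *m y -> x = y.
Proof. by move=> /posdef_unitmx uG /(congr1 (mulmx (invmx G))); rewrite !mulKmx. Qed.

Lemma posdef_invmx G : posdef G -> posdef (invmx G).
Proof.
move=> pG x x_neq0; have uG := posdef_unitmx pG.
have y_neq0 : invmx G *m x != 0.
  by apply: contra x_neq0 => /eqP y0; rewrite -(mulKVmx uG x) y0 mulmx0.
have -> : qf (invmx G) x = qf G^T (invmx G *m x).
  by rewrite /qf trmx_mul trmx_inv !mulmxA mulmxKV ?unitmx_tr // -mulmxA mulKVmx.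
by rewrite qf_trmx pG.
Qed.

End BilinearForm.

Section SaddlePoint.
Variables (R : rcfType) (m n : nat).
Implicit Types (M : 'M[R]_m) (A : 'M[R]_(m, n)) (C : 'M[R]_n).

Lemma full_col_rank_mulmx_eq0 A (z : 'cV[R]_n) : \rank A = n -> A *m z = 0 -> z = 0.
Proof.
move=> rkA Az0; have freeAt : row_free A^T by rewrite /row_free mxrank_tr rkA.
apply: trmx_inj; apply/eqP; rewrite trmx0 -(mulmx_free_eq0 _ freeAt).
by rewrite -trmx_mul Az0 trmx0.
Qed.

Lemma posdef_schur M A C :
  posdef M -> \rank A = n -> possemidef C -> posdef (A^T *m invmx M *m A + C).
Proof.
move=> pM rkA pC x x_neq0.
have Ax_neq0 : A *m x != 0.
  by apply: contra x_neq0 => /eqP /(full_col_rank_mulmx_eq0 rkA) ->.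
have -> : qf (A^T *m invmx M *m A + C) x = qf (invmx M) (A *m x) + qf C x.
  by rewrite /qf mulmxDr mulmxDl mxE trmx_mul !mulmxA.
have := posdef_invmx pM Ax_neq0; have := pC x; lra.
Qed.

Lemma saddle_point_schur M A C (b : 'cV[R]_n) u p :
  M \in unitmx -> M *m u + A *m p = 0 -> A^T *m u - C *m p = b ->
  u = - (invmx M *m A *m p) /\ (A^T *m invmx M *m A + C) *m p = - b.
Proof.
move=> uM eq1 eq2.
have uE : u = - (invmx M *m A *m p).
  have MuE : M *m u = - (A *m p) by apply/eqP; rewrite -addr_eq0 eq1.
  by rewrite -(mulKmx uM u) MuE mulmxN mulmxA.
by split=> //; rewrite -eq2 uE opprB mulmxDl mulmxN !mulmxA opprK addrC.
Qed.

End SaddlePoint.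

Section Orthonormal.
Variables (R : rcfType) (k : nat) (G : 'M[R]_k).
Implicit Types (q : nat -> 'cV[R]_k) (x : 'cV[R]_k).

Definition orthonormal q K : Prop :=
  forall i j, (1 <= i <= K)%N -> (1 <= j <= K)%N -> bform G (q i) (q j) = (i == j)%:R.

Lemma orthonormal1 q : bform G (q 1%N) (q 1%N) = 1 -> orthonormal q 1.
Proof. by move=> q11 i j; rewrite -!eqn_leq => /eqP <- /eqP <-; rewrite q11. Qed.

Lemma orthonormalS q K :
  G^T = G -> orthonormal q K ->
  (forall i, (1 <= i <= K)%N -> bform G (q i) (q K.+1) = 0) ->
  bform G (q K.+1) (q K.+1) = 1 -> orthonormal q K.+1.
Proof.
move=> symG onq qK0 qK1 i j /andP[i_gt0 iK] /andP[j_gt0 jK].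
have neqS l : (l <= K)%N -> (l == K.+1) = false by move=> lK; rewrite ltn_eqF.
rewrite leq_eqVlt ltnS in iK; rewrite leq_eqVlt ltnS in jK.
case/orP: iK => [/eqP->|iK]; case/orP: jK => [/eqP->|jK].
- by rewrite qK1 eqxx.
- by rewrite bformC // qK0 ?j_gt0 // eq_sym neqS.
- by rewrite qK0 ?i_gt0 // neqS.
- by rewrite onq ?i_gt0 ?j_gt0.
Qed.

Lemma bform_gram_schmidt q K x i :
  orthonormal q K -> (1 <= i <= K)%N ->
  bform G (q i) (x - \sum_(1 <= l < K.+1) bform G (q l) x *: q l) = 0.
Proof.
move=> onq iK; rewrite bformBr bform_sumr.
rewrite (eq_big_nat _ _ (F2 := fun l => bform G (q l) x *+ (l == i))); last first.
  by move=> l lK; rewrite bformZr onq // mulr_natr eq_sym.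
by rewrite sum_nat_mulrb ltnS iK subrr.
Qed.

Lemma bform_normalize x c :
  c != 0 -> bform G x x = c ^+ 2 -> bform G (c^-1 *: x) (c^-1 *: x) = 1.
Proof. by move=> c_neq0 xx; rewrite bformZl bformZr xx mulrA -expr2 exprVn mulVf ?expf_neq0. Qed.

End Orthonormal.

Section ColumnMatrices.
Variables (R : rcfType) (p : nat).
Implicit Types (x y : nat -> 'cV[R]_p).

Lemma col_Qmat x K (j : 'I_K) : col j (Qmat x K) = x j.+1.
Proof. by apply/colP => i; rewrite !mxE. Qed.

Lemma eq_Qmat x y K : (forall j, (1 <= j <= K)%N -> x j = y j) -> Qmat x K = Qmat y K.
Proof. by move=> xy; apply/matrixP => i j; rewrite !mxE xy // ltn_ord. Qed.

Lemma mulmx_Qmat p' (X : 'M[R]_(p', p)) x K : X *m Qmat x K = Qmat (fun j => X *m x j) K.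
Proof. by apply/matrixP => i j; rewrite !mxE; apply: eq_bigr => l _; rewrite !mxE. Qed.

Lemma QmatD x y K : Qmat x K + Qmat y K = Qmat (fun j => x j + y j) K.
Proof. by apply/matrixP => i j; rewrite !mxE. Qed.

Lemma Qmat_mulmx x K c (f : nat -> nat -> R) :
  Qmat x K *m (\matrix_(l < K, j < c) f l j) =
  Qmat (fun j => \sum_(0 <= l < K) f l j.-1 *: x l.+1) c.
Proof.
apply/matrixP => i j; rewrite !mxE summxE big_mkord.
by apply: eq_bigr => l _; rewrite !mxE mulrC.
Qed.

Lemma Qmat_Bmat x (alpha beta : nat -> R) K :
  Qmat x K *m Bmat alpha beta K =
  Qmat (fun j => alpha j *: x j + (if (1 < j)%N then beta j *: x j.-1 else 0)) K.
Proof.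
rewrite /Bmat (Qmat_mulmx _ _ _ (fun l j =>
  if j == l then alpha l.+1 else if j == l.+1 then beta j.+1 else 0)).
apply: eq_Qmat => -[|j] //= jK.
rewrite (eq_big_nat _ _ (F2 := fun l =>
  (alpha l.+1 *: x l.+1) *+ (l == j) + (beta j.+1 *: x l.+1) *+ (l.+1 == j))); last first.
  move=> l _; rewrite [in LHS]eq_sym; have [->|_] := eqVneq l j.
    by rewrite gtn_eqF // mulr1n mulr0n addr0.
  by rewrite mulr0n add0r [l.+1 == j]eq_sym; case: eqP; rewrite ?scale0r.
rewrite big_split /= sum_nat_mulrb jK; case: j jK => [|j] jK /=.
  by rewrite big1 // => l _; rewrite mulr0n.
under eq_bigr => l _ do rewrite eqSS.
by rewrite sum_nat_mulrb (ltnW jK).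
Qed.

Lemma Qmat_Hmat x (h : nat -> nat -> R) (beta : nat -> R) K :
  Qmat x K *m Hmat h beta K =
  Qmat (fun j => \sum_(1 <= l < j.+1) h j l *: x l
                 + (if (j < K)%N then beta j.+1 *: x j.+1 else 0)) K.
Proof.
rewrite /Hmat (Qmat_mulmx _ _ _ (fun l j =>
  if (l <= j)%N then h j.+1 l.+1 else if l == j.+1 then beta j.+2 else 0)).
apply: eq_Qmat => -[|j] //= jK.
rewrite (eq_big_nat _ _ (F2 := fun l =>
  (if (l <= j)%N then h j.+1 l.+1 *: x l.+1 else 0) + (beta j.+2 *: x l.+1) *+ (l == j.+1))); last first.
  move=> l _; case: leqP => [lj|_]; last by rewrite add0r; case: eqP; rewrite ?scale0r.
  by rewrite ltn_eqF // addr0.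
rewrite big_split /= sum_nat_mulrb; congr (_ + _).
by rewrite -big_mkcond big_add1 /= [RHS](big_nat_widen _ _ K).
Qed.

Lemma Qmat_e1 x K : (0 < K)%N -> Qmat x K *m e1 R K = x 1%N.
Proof.
move=> K_gt0; rewrite /e1 (Qmat_mulmx _ _ _ (fun l _ => if l == 0%N then 1 else 0)).
apply/colP => i; rewrite !mxE /=.
rewrite (eq_big_nat _ _ (F2 := fun l => x l.+1 *+ (l == 0%N))); last first.
  by move=> l _; case: eqP; rewrite ?scale1r ?scale0r.
by rewrite sum_nat_mulrb K_gt0.
Qed.

Lemma orthonormal_Qmat (G : 'M[R]_p) x K :
  orthonormal G x K -> (Qmat x K)^T *m G *m Qmat x K = 1%:M.
Proof.
move=> onx; apply/matrixP => i j.
have -> : ((Qmat x K)^T *m G *m Qmat x K) i j = bform G (x i.+1) (x j.+1).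
  rewrite /bform -(col_Qmat x i) -(col_Qmat x j) tr_col -row_mul !mxE.
  by apply: eq_bigr => l _; rewrite !mxE.
by rewrite onx ?ltn_ord // mxE.
Qed.

End ColumnMatrices.

Lemma posdef_galerkin (R : rcfType) (n k : nat)
    (S G : 'M[R]_n) (Q : 'M[R]_(n, k)) (T : 'M[R]_k) :
  posdef S -> Q^T *m G *m Q = 1%:M -> S *m Q = G *m Q *m T -> posdef T.
Proof.
move=> pS QGQ SQ x x_neq0.
have Qx_neq0 : Q *m x != 0.
  by apply: contra x_neq0 => /eqP Qx0; rewrite -(mul1mx x) -QGQ -mulmxA Qx0 mulmx0.
have -> : T = Q^T *m S *m Q by rewrite -mulmxA SQ !mulmxA QGQ mul1mx.
by move: (pS _ Qx_neq0); rewrite /qf trmx_mul !mulmxA.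
Qed.

Section NsCRAIG.
Variables (R : rcfType) (m n : nat).
Variables (M : 'M[R]_m) (A : 'M[R]_(m, n)) (C N : 'M[R]_n) (b : 'cV[R]_n).
Variables (ustar : 'cV[R]_m) (pstar : 'cV[R]_n).
Variables (q r s t ghat g : nat -> 'cV[R]_n) (w v : nat -> 'cV[R]_m).
Variables (alpha beta : nat -> R) (h : nat -> nat -> R) (K : nat).

Hypotheses (K_gt0 : (1 <= K)%N) (pdM : posdef M) (rankA : \rank A = n)
  (psdC : possemidef C) (b_neq0 : b != 0) (symN : N^T = N) (pdN : posdef N).
Hypotheses (saddle1 : M *m ustar + A *m pstar = 0)
  (saddle2 : A^T *m ustar - C *m pstar = b).
Hypotheses (beta1E : beta 1%N = Gnorm (invmx N) b)
  (q1E : q 1%N = (beta 1%N)^-1 *: (invmx N *m b))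
  (r1E : r 1%N = q 1%N) (w1E : w 1%N = invmx M *m A *m q 1%N).
Hypotheses (sE : forall j, (1 <= j <= K)%N -> s j = C *m r j)
  (alphaE : forall j, (1 <= j <= K)%N ->
     alpha j = Num.sqrt (qf M (w j) + ((r j)^T *m s j) 0 0))
  (vE : forall j, (1 <= j <= K)%N -> v j = (alpha j)^-1 *: w j)
  (tE : forall j, (1 <= j <= K)%N -> t j = (alpha j)^-1 *: s j)
  (ghatE : forall j, (1 <= j <= K)%N -> ghat j = invmx N *m (A^T *m v j + t j))
  (hE : forall j i, (1 <= j <= K)%N -> (1 <= i <= j)%N ->
     h j i = ((q i)^T *m N *m ghat j) 0 0)
  (gE : forall j, (1 <= j <= K)%N -> g j = ghat j - \sum_(1 <= i < j.+1) h j i *: q i)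
  (betaSE : forall j, (1 <= j <= K)%N -> beta j.+1 = Gnorm N (g j)).
Hypotheses (betaS_neq0 : forall j, (1 <= j < K)%N -> beta j.+1 != 0)
  (qSE : forall j, (1 <= j < K)%N -> q j.+1 = (beta j.+1)^-1 *: g j)
  (wSE : forall j, (1 <= j < K)%N -> w j.+1 = invmx M *m A *m q j.+1 - beta j.+1 *: v j)
  (rSE : forall j, (1 <= j < K)%N -> r j.+1 = q j.+1 - (beta j.+1 / alpha j) *: r j).

Lemma beta1_gt0 : 0 < beta 1%N.
Proof. by rewrite beta1E sqrtr_gt0 (posdef_invmx pdN b_neq0). Qed.

Lemma bform_q1 : bform N (q 1%N) (q 1%N) = 1.
Proof.
rewrite q1E; apply: bform_normalize; first by rewrite gt_eqF ?beta1_gt0.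
rewrite beta1E sqr_Gnorm; last exact: (posdef_semidef (posdef_invmx pdN) b).
rewrite /bform trmx_mul trmx_inv symN -mulmxA (mulmxA N) mulmxV ?posdef_unitmx //.
by rewrite mul1mx.
Qed.

Lemma bform_q_g j i :
  (1 <= j <= K)%N -> orthonormal N q j -> (1 <= i <= j)%N -> bform N (q i) (g j) = 0.
Proof.
move=> jK onq ij; rewrite gE // (eq_big_nat _ _ (F2 := fun l => bform N (q l) (ghat j) *: q l)).
  exact: bform_gram_schmidt.
by move=> l lj; rewrite hE.
Qed.

Lemma bform_g j : (1 <= j <= K)%N -> bform N (g j) (g j) = beta j.+1 ^+ 2.
Proof. by move=> jK; rewrite betaSE // sqr_Gnorm // (posdef_semidef pdN). Qed.

Lemma q_orthonormal_upto k : (1 <= k <= K)%N -> orthonormal N q k.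
Proof.
elim: k => [//|k IH] /andP[_ kK]; have [->|k_gt0] := posnP k.
  exact: orthonormal1 bform_q1.
have kK' : (1 <= k < K)%N by rewrite k_gt0.
have onq : orthonormal N q k by apply: IH; rewrite k_gt0 ltnW.
apply: orthonormalS => //.
  by move=> i ik; rewrite qSE // bformZr bform_q_g ?mulr0 // k_gt0 ltnW.
by rewrite qSE //; apply: bform_normalize; rewrite ?betaS_neq0 // bform_g // k_gt0 ltnW.
Qed.

Lemma q_orthonormal : orthonormal N q K.
Proof. by apply: q_orthonormal_upto; rewrite K_gt0 leqnn. Qed.

Lemma bform_q_r j i :
  (1 <= j <= K)%N -> (j <= i <= K)%N -> bform N (q i) (r j) = (i == j)%:R.
Proof.
elim: j i => [//|j IH] i /andP[_ jK] /andP[ji iK]; have [->|j_gt0] := posnP j.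
  by rewrite r1E q_orthonormal // iK (leq_trans _ ji).
have jK1 : (1 <= j <= K)%N by rewrite j_gt0 ltnW.
have jiK : (j <= i <= K)%N by rewrite (ltnW ji) iK.
rewrite rSE ?j_gt0 // bformBr bformZr IH // (gtn_eqF ji) mulr0 subr0.
by rewrite q_orthonormal // iK (leq_trans _ ji).
Qed.

Lemma r_neq0 j : (1 <= j <= K)%N -> r j != 0.
Proof.
move=> jK; apply/eqP => rj0.
have jjK : (j <= j <= K)%N by rewrite leqnn (andP jK).2.
by have := bform_q_r jK jjK; rewrite rj0 bform0r eqxx => /eqP; rewrite eq_sym oner_eq0.
Qed.

Lemma wE j : (1 <= j <= K)%N -> w j = invmx M *m A *m r j.
Proof.
elim: j => [//|j IH] /andP[_ jK]; have [->|j_gt0] := posnP j; first by rewrite w1E r1E.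
have jK1 : (1 <= j <= K)%N by rewrite j_gt0 ltnW.
rewrite wSE ?j_gt0 // rSE ?j_gt0 // vE // IH //.
by rewrite mulmxBr scalerA -scalemxAr.
Qed.

Lemma alpha_gt0 j : (1 <= j <= K)%N -> 0 < alpha j.
Proof.
move=> jK; have Ar_neq0 : A *m r j != 0.
  by apply: contra (r_neq0 jK) => /eqP /(full_col_rank_mulmx_eq0 rankA) ->.
have w_neq0 : w j != 0.
  rewrite wE // -mulmxA; apply: contra Ar_neq0 => /eqP MAr0.
  by apply/eqP; apply: (posdef_mulmxI (posdef_invmx pdM)); rewrite MAr0 mulmx0.
have := pdM w_neq0; have := psdC (r j).
by rewrite alphaE // sE // sqrtr_gt0 /qf mulmxA; lra.
Qed.

Lemma alphaZv j : (1 <= j <= K)%N -> alpha j *: v j = w j.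
Proof. by move=> jK; rewrite vE // scalerA mulfV ?scale1r // gt_eqF // alpha_gt0. Qed.

Lemma alphaZt j : (1 <= j <= K)%N -> alpha j *: t j = s j.
Proof. by move=> jK; rewrite tE // scalerA mulfV ?scale1r // gt_eqF // alpha_gt0. Qed.

Lemma MA_q j : (1 <= j <= K)%N ->
  invmx M *m A *m q j = alpha j *: v j + (if (1 < j)%N then beta j *: v j.-1 else 0).
Proof.
case: j => [//|[|j]] jK; first by rewrite addr0 alphaZv // w1E.
by rewrite alphaZv // wSE // subrK.
Qed.

Lemma C_q j : (1 <= j <= K)%N ->
  C *m q j = alpha j *: t j + (if (1 < j)%N then beta j *: t j.-1 else 0).
Proof.
case: j => [//|[|j]] jK; first by rewrite addr0 alphaZt // sE // r1E.
by rewrite alphaZt // sE // rSE // tE ?sE ?(ltnW jK) // mulmxBr -scalemxAr scalerA subrK.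
Qed.

Lemma MA_Qmat : invmx M *m A *m Qmat q K = Qmat v K *m Bmat alpha beta K.
Proof. by rewrite mulmx_Qmat Qmat_Bmat; apply: eq_Qmat => j jK; rewrite MA_q. Qed.

Lemma C_Qmat : C *m Qmat q K = Qmat t K *m Bmat alpha beta K.
Proof. by rewrite mulmx_Qmat Qmat_Bmat; apply: eq_Qmat => j jK; rewrite C_q. Qed.

Lemma N_Qmat_ghat : N *m Qmat ghat K = A^T *m Qmat v K + Qmat t K.
Proof.
rewrite !mulmx_Qmat QmatD; apply: eq_Qmat => j jK.
by rewrite ghatE // mulKVmx ?posdef_unitmx.
Qed.

Lemma schur_Qmat :
  (A^T *m invmx M *m A + C) *m Qmat q K = N *m Qmat ghat K *m Bmat alpha beta K.
Proof.
rewrite mulmxDl -(mulmxA (A^T *m invmx M)) -mulmxA (mulmxA (invmx M)) MA_Qmat C_Qmat.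
by rewrite N_Qmat_ghat mulmxDl mulmxA.
Qed.

Section Stopped.
Hypothesis beta_stop : beta K.+1 = 0.

Lemma gK_eq0 : g K = 0.
Proof.
apply: (posdef_qf_eq0 pdN); rewrite qfE bform_g; last by rewrite K_gt0 leqnn.
by rewrite beta_stop expr2 mulr0.
Qed.

(* The last column of Q_K H_K lacks beta_(K+1) q_(K+1) = g_K, which vanishes
   exactly when the recurrence stops. *)
Lemma Qmat_Hmat_ghat : Qmat q K *m Hmat h beta K = Qmat ghat K.
Proof.
rewrite Qmat_Hmat; apply: eq_Qmat => j jK.
rewrite -[ghat j](subrK (\sum_(1 <= l < j.+1) h j l *: q l)) -gE // addrC.
congr (_ + _); case: ltnP => [jK'|Kj].
  by rewrite qSE ?(andP jK).1 // scalerA mulfV ?scale1r // betaS_neq0 ?(andP jK).1.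
have -> : j = K by apply/eqP; rewrite eqn_leq Kj (andP jK).2.
by rewrite gK_eq0.
Qed.

Lemma craig_p_exact : craig_p q alpha beta h K = pstar.
Proof.
pose S := A^T *m invmx M *m A + C.
have pdS : posdef S := posdef_schur pdM rankA psdC.
have SQ : S *m Qmat q K = N *m Qmat q K *m (Hmat h beta K *m Bmat alpha beta K).
  by rewrite schur_Qmat -Qmat_Hmat_ghat !mulmxA.
have pdT := posdef_galerkin pdS (orthonormal_Qmat q_orthonormal) SQ.
have /andP[uH uB] : (Hmat h beta K \in unitmx) && (Bmat alpha beta K \in unitmx).
  by rewrite -unitmx_mul (posdef_unitmx pdT).
have [_ Spstar] := saddle_point_schur (posdef_unitmx pdM) saddle1 saddle2.
apply: (posdef_mulmxI pdS); rewrite Spstar /craig_p /craig_y mulmxA SQ.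
rewrite mulmxN !mulmxA mulmxK // mulmxK // -mulmxA -scalemxAr Qmat_e1 // q1E.
by rewrite scalerA mulfV ?gt_eqF ?beta1_gt0 // scale1r mulKVmx ?posdef_unitmx.
Qed.

Lemma craig_u_exact : craig_u M A q alpha beta h K = ustar.
Proof.
have [ustarE _] := saddle_point_schur (posdef_unitmx pdM) saddle1 saddle2.
by rewrite /craig_u craig_p_exact ustarE.
Qed.

End Stopped.

Lemma nscraig_correct :
  (forall j, (1 <= j <= K)%N -> 0 < alpha j) /\
  (beta K.+1 = 0 ->
     craig_u M A q alpha beta h K = ustar /\ craig_p q alpha beta h K = pstar).
Proof.
by split=> [|stop]; [exact: alpha_gt0 | rewrite craig_u_exact ?craig_p_exact].
Qed.

End NsCRAIG.

(* Sequences are indexed from 1 as in the paper (index 0 unused).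
   The recurrence has been run up to step K (beta_2,...,beta_K <> 0). *)
Theorem mainTheorem9 (R : rcfType) (m n : nat)
  (M : 'M[R]_m) (A : 'M[R]_(m, n)) (C N : 'M[R]_n) (b : 'cV[R]_n)
  (ustar : 'cV[R]_m) (pstar : 'cV[R]_n)
  (q r s t ghat g : nat -> 'cV[R]_n) (w v : nat -> 'cV[R]_m)
  (alpha beta : nat -> R) (h : nat -> nat -> R) (K : nat) :
  (1 <= K)%N ->
  posdef M ->
  (n <= m)%N -> \rank A = n ->
  C^T = C -> possemidef C ->
  b != 0 ->
  N^T = N -> posdef N ->
  M *m ustar + A *m pstar = 0 ->
  A^T *m ustar - C *m pstar = b ->
  beta 1%N = Gnorm (invmx N) b ->
  q 1%N = (beta 1%N)^-1 *: (invmx N *m b) ->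
  r 1%N = q 1%N ->
  w 1%N = invmx M *m A *m q 1%N ->
  (forall j, (1 <= j <= K)%N -> s j = C *m r j) ->
  (forall j, (1 <= j <= K)%N ->
     alpha j = Num.sqrt (qf M (w j) + ((r j)^T *m s j) 0 0)) ->
  (forall j, (1 <= j <= K)%N -> v j = (alpha j)^-1 *: w j) ->
  (forall j, (1 <= j <= K)%N -> t j = (alpha j)^-1 *: s j) ->
  (forall j, (1 <= j <= K)%N -> ghat j = invmx N *m (A^T *m v j + t j)) ->
  (forall j i, (1 <= j <= K)%N -> (1 <= i <= j)%N ->
     h j i = ((q i)^T *m N *m ghat j) 0 0) ->
  (forall j, (1 <= j <= K)%N ->
     g j = ghat j - \sum_(1 <= i < j.+1) h j i *: q i) ->
  (forall j, (1 <= j <= K)%N -> beta j.+1 = Gnorm N (g j)) ->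
  (forall j, (1 <= j < K)%N -> beta j.+1 != 0) ->
  (forall j, (1 <= j < K)%N -> q j.+1 = (beta j.+1)^-1 *: g j) ->
  (forall j, (1 <= j < K)%N ->
     w j.+1 = invmx M *m A *m q j.+1 - beta j.+1 *: v j) ->
  (forall j, (1 <= j < K)%N ->
     r j.+1 = q j.+1 - (beta j.+1 / alpha j) *: r j) ->
  (forall j, (1 <= j <= K)%N -> 0 < alpha j) /\
  (beta K.+1 = 0 ->
     craig_u M A q alpha beta h K = ustar /\ craig_p q alpha beta h K = pstar).
Proof.
move=> K_gt0 pdM _ rankA _ psdC b_neq0 symN pdN.
exact: (nscraig_correct K_gt0 pdM rankA psdC b_neq0 symN pdN).
Qed.
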